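(* Consider the two-observation signaling game with observations $o_1,o_2$ (each with probability $\tfrac12$), messages $m_1,m_2$, actions $a_1,a_2$, and two reward functions $R(o_i,a_j)=1$ if $i=j$ and $0$ otherwise, and $R'(o_i,a_j)=1$ if $i\neq j$ and $0$ otherwise. There are two instructors with parameters $S,S'\in[0,1]$ and one shared executor with parameter $L\in[0,1]$, where an instructor with parameter $X$ sends $m_j$ on $o_i$ with probability $\pi_X(m_j\mid o_i)=X$ if $i=j$ and $1-X$ otherwise, and the executor takes $a_j$ on $m_i$ with probability $\pi_L(a_j\mid m_i)=L$ if $i=j$ and $1-L$ otherwise. The joint objective is $$J(S,S',L)=\sum_{o,m,a}p(o)\pi_S(m\mid o)\pi_L(a\mid m)R(o,a)+\sum_{o,m,a}p(o)\pi_{S'}(m\mid o)\pi_L(a\mid m)R'(o,a).$$ Let $(S(t),S'(t),L(t))_{t\ge0}$ evolve by the gradient flow of $J$ (gradient ascent in continuous time), clipped so that the derivative of a parameter is $0$ whenever that parameter equals $0$ or $1$, with initial values in $(0,1)$. Suppose $L(0)>\tfrac12$ and $S(0)=S'(0)$. Then the three agents do not undergo semantic drift: $L(t)\to 1$ as $t\to\infty$; in particular, the eventual executor parameter is independent of the initial instructor parameters $S(0)=S'(0)$.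
   Context: Messages are thought of as natural-language commands ($m_i$ means ''do $a_i$''). An initialization is said to undergo executor semantic drift if, after training, the executor parameter satisfies $L<\tfrac12$. *)

From Stdlib Require Import Reals Lra.
From Coquelicot Require Import Coquelicot.
Open Scope R_scope.

(* Observations, messages, actions are indexed by bool: true ~ index 1, false ~ index 2. *)
Definition sumb (f : bool -> R) : R := f true + f false.

Definition p_obs (o : bool) : R := 1 / 2.

Definition pol (X : R) (i j : bool) : R := if Bool.eqb i j then X else 1 - X.

Definition Rw (o a : bool) : R := if Bool.eqb o a then 1 else 0.
Definition Rw' (o a : bool) : R := if Bool.eqb o a then 0 else 1.

Definition J (S S' L : R) : R :=
  sumb (fun o => sumb (fun m => sumb (fun a =>
    p_obs o * pol S o m * pol L m a * Rw o a)))
  + sumb (fun o => sumb (fun m => sumb (fun a =>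
    p_obs o * pol S' o m * pol L m a * Rw' o a))).

Definition clip (x g : R) : R :=
  if Req_EM_T x 0 then 0 else if Req_EM_T x 1 then 0 else g.

Definition right_deriv (f : R -> R) (t v : R) : Prop :=
  filterlim (fun h => (f (t + h) - f t) / h) (at_right 0) (locally v).

(* (S, S', L) is a clipped gradient-ascent flow of J on [0, +oo) with values in [0,1].
   Solutions are continuous and satisfy the ODE with right derivatives (a classical
   two-sided derivative cannot exist at the time a parameter hits the boundary). *)
Definition clipped_flow (S S' L : R -> R) : Prop :=
  (forall t, 0 <= t -> 0 <= S t <= 1 /\ 0 <= S' t <= 1 /\ 0 <= L t <= 1) /\
  (forall t, 0 < t -> continuous S t /\ continuous S' t /\ continuous L t) /\
  (forall t, 0 <= t ->
     right_deriv S t (clip (S t) (Derive (fun x => J x (S' t) (L t)) (S t))) /\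
     right_deriv S' t (clip (S' t) (Derive (fun x => J (S t) x (L t)) (S' t))) /\
     right_deriv L t (clip (L t) (Derive (fun x => J (S t) (S' t) x) (L t)))).

From Stdlib Require Import Reals Lra Classical.
From Coquelicot Require Import Coquelicot.
Open Scope R_scope.

(* The gradient of J is (2L - 1, 1 - 2L, 2(S - S')), so 1 - S' obeys the same clipped
   equation as S.  While L > 1/2 the instructors S and 1 - S' increase, hence
   S - S' >= S(0) - S'(0) = 0 and L increases too: by real induction L stays above
   L(0) > 1/2 forever.  Then S and 1 - S' grow at rate at least 2 L(0) - 1 until they
   stick at 1, after which L grows at rate 2 until it sticks at 1 as well. *)

Lemma continuous_ge_left (f : R -> R) a c m :
  a < c -> continuous f c -> (forall t, a <= t < c -> m <= f t) -> m <= f c.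
Proof.
  intros ac fc fm.
  apply (closed_filterlim_loc (F := at_left c) f (fun y => m <= y)).
  - intros P HP. destruct (fc P HP) as [d Hd]. exists d. intros y Hy _. exact (Hd y Hy).
  - exists (mkposreal (c - a) ltac:(lra)). intros y Hy yc. apply fm.
    change (Rabs (y - c) < c - a) in Hy. apply Rabs_lt_between' in Hy. lra.
  - apply closed_ge.
Qed.

Lemma real_induction (P : R -> Prop) a :
  (forall c, a <= c -> (forall t, a <= t < c -> P t) ->
     exists d, 0 < d /\ forall t, c <= t < c + d -> P t) ->
  forall t, a <= t -> P t.
Proof.
  intros step t0 at0. apply NNPP. intro nP.
  set (E := fun x => a <= x /\ forall t, a <= t < x -> P t).
  destruct (completeness E) as [c [c_ub c_lub]].
  - exists t0. intros x [ax Px]. destruct (Rle_dec x t0) as [|xt]; [assumption|].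
    exfalso. apply nP, Px. lra.
  - exists a. split; [lra | intros; lra].
  - assert (ac : a <= c) by (apply c_ub; split; [lra | intros; lra]).
    assert (below : forall t, a <= t < c -> P t).
    { intros t Ht. apply NNPP. intro nPt. assert (c <= t) by
        (apply c_lub; intros x [_ Px]; destruct (Rle_dec x t) as [|xt]; [assumption|];
         exfalso; apply nPt, Px; lra).
      lra. }
    destruct (step c ac below) as [d [d0 above]].
    assert (beyond : E (c + d)).
    { split; [lra|]. intros t Ht. destruct (Rlt_dec t c); [apply below | apply above]; lra. }
    specialize (c_ub _ beyond). lra.
Qed.

Lemma right_deriv_gt f t v k :
  right_deriv f t v -> k < v ->
  exists d, 0 < d /\ forall h, 0 < h < d -> f t + k * h < f (t + h).
Proof.
  intros fd kv.
  destruct (proj1 (filterlim_locally _ _) fd (mkposreal (v - k) ltac:(lra))) as [d Hd].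
  exists d. split; [apply cond_pos|]. intros h [h0 hd].
  assert (Hq := Hd h). simpl in Hq.
  set (q := (f (t + h) - f t) / h) in Hq.
  assert (fq : f (t + h) - f t = q * h) by (unfold q; field; lra).
  assert (close : Rabs (q - v) < v - k).
  { apply Hq; [|lra]. change (Rabs (h - 0) < d). rewrite Rminus_0_r, Rabs_right; lra. }
  apply Rabs_lt_between' in close.
  nra.
Qed.

Lemma right_deriv_compl f t v :
  right_deriv f t v -> right_deriv (fun x => 1 - f x) t (- v).
Proof.
  intros fd. unfold right_deriv.
  apply (filterlim_ext (fun h => - ((f (t + h) - f t) / h))).
  - intros h. unfold Rdiv. ring.
  - eapply filterlim_comp; [exact fd | exact (filterlim_opp v)].
Qed.

Lemma right_deriv_increment_ge (f v : R -> R) k a b :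
  a <= b -> (forall t, a < t <= b -> continuous f t) ->
  (forall t, a <= t < b -> right_deriv f t (v t)) -> (forall t, a <= t < b -> k <= v t) ->
  f a + k * (b - a) <= f b.
Proof.
  intros ab fc fd kv.
  assert (slack : forall e, 0 < e -> forall t, a <= t -> t <= b ->
            f a + (k - e) * (t - a) <= f t).
  { intros e e0.
    apply (real_induction (fun t => t <= b -> f a + (k - e) * (t - a) <= f t)).
    intros c ac below.
    assert (at_c : c <= b -> f a + (k - e) * (c - a) <= f c).
    { intros cb. destruct (Req_dec c a) as [->|ca]; [lra|].
      enough (f a <= f c - (k - e) * (c - a)) by lra.
      apply (continuous_ge_left (fun t => f t - (k - e) * (t - a)) a); [lra| |].
      - apply continuity_pt_filterlim, continuity_pt_minus; [|reg].
        apply continuity_pt_filterlim, fc. lra.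
      - intros t Ht. enough (f a + (k - e) * (t - a) <= f t) by lra. apply below; lra. }
    destruct (Rlt_le_dec c b) as [cb|bc].
    - destruct (right_deriv_gt f c (v c) (k - e) (fd c (conj ac cb))) as [d [d0 Hd]].
      { specialize (kv c (conj ac cb)). lra. }
      exists d. split; [exact d0|]. intros t [ct td] tb.
      destruct (Req_dec t c) as [->|tc]; [apply at_c; lra|].
      specialize (Hd (t - c) ltac:(lra)). replace (c + (t - c)) with t in Hd by ring.
      specialize (at_c ltac:(lra)). nra.
    - exists 1. split; [lra|]. intros t [ct _] tb.
      replace t with c by lra. apply at_c. lra. }
  apply Rle_plus_epsilon. intros eps eps0.
  set (e := eps / (b - a + 1)).
  assert (e0 : 0 < e) by (apply Rdiv_lt_0_compat; lra).
  assert (e_eps : e * (b - a + 1) = eps) by (unfold e; field; lra).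
  specialize (slack e e0 b ab (Rle_refl b)). nra.
Qed.

Lemma right_deriv_nondecreasing (f v : R -> R) a b :
  a <= b -> (forall t, a < t <= b -> continuous f t) ->
  (forall t, a <= t < b -> right_deriv f t (v t)) -> (forall t, a <= t < b -> 0 <= v t) ->
  f a <= f b.
Proof.
  intros ab fc fd v0. pose proof (right_deriv_increment_ge f v 0 a b ab fc fd v0). lra.
Qed.

Lemma clip_interior x g : 0 < x < 1 -> clip x g = g.
Proof.
  intros. unfold clip.
  destruct (Req_EM_T x 0); [lra|]. destruct (Req_EM_T x 1); [lra|]. reflexivity.
Qed.

Lemma clip_ge0 x g : 0 <= g -> 0 <= clip x g.
Proof. intros. unfold clip. destruct (Req_EM_T x 0); [lra|]. destruct (Req_EM_T x 1); lra. Qed.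

Lemma clip_compl x g : clip (1 - x) (- g) = - clip x g.
Proof.
  unfold clip.
  destruct (Req_EM_T (1 - x) 0), (Req_EM_T x 0), (Req_EM_T (1 - x) 1), (Req_EM_T x 1);
    lra.
Qed.

Definition solves_clipped (X g : R -> R) : Prop :=
  (forall t, 0 <= t -> 0 <= X t <= 1) /\
  (forall t, 0 < t -> continuous X t) /\
  (forall t, 0 <= t -> right_deriv X t (clip (X t) (g t))).

Lemma solves_clipped_nondecreasing X g a b :
  solves_clipped X g -> 0 <= a <= b -> (forall t, a <= t < b -> 0 <= g t) -> X a <= X b.
Proof.
  intros (_ & Xc & Xd) ab g0.
  apply (right_deriv_nondecreasing X (fun t => clip (X t) (g t))); [lra | | |].
  - intros t Ht. apply Xc. lra.
  - intros t Ht. apply Xd. lra.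
  - intros t Ht. apply clip_ge0, g0, Ht.
Qed.

Lemma solves_clipped_eventually_one X g k t0 :
  solves_clipped X g -> 0 <= t0 -> 0 < k -> (forall t, t0 <= t -> k <= g t) -> 0 < X t0 ->
  exists t1, t0 <= t1 /\ forall t, t1 <= t -> X t = 1.
Proof.
  intros Xsol t00 k0 gk X0.
  assert (mono : forall a b, t0 <= a <= b -> X a <= X b).
  { intros a b ab. apply (solves_clipped_nondecreasing X g); [exact Xsol | lra |].
    intros t Ht. specialize (gk t ltac:(lra)). lra. }
  destruct Xsol as (Xb & Xc & Xd).
  assert (hits : exists t1, t0 <= t1 /\ X t1 = 1).
  { apply NNPP. intro never.
    assert (inside : forall t, t0 <= t -> 0 < X t < 1).
    { intros t Ht. specialize (mono t0 t ltac:(lra)). destruct (Xb t ltac:(lra)).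
      destruct (Req_dec (X t) 1); [exfalso; apply never; exists t; auto | lra]. }
    set (b := t0 + 1 / k).
    assert (kb : k * (b - t0) = 1) by (unfold b; field; lra).
    assert (t0b : t0 <= b) by (unfold b; pose proof (Rdiv_lt_0_compat 1 k ltac:(lra) k0); lra).
    assert (X t0 + k * (b - t0) <= X b).
    { apply (right_deriv_increment_ge X (fun t => clip (X t) (g t))); [exact t0b | | |].
      - intros t Ht. apply Xc. lra.
      - intros t Ht. apply Xd. lra.
      - intros t Ht. rewrite clip_interior by (apply inside; lra). apply gk. lra. }
    specialize (inside b t0b). lra. }
  destruct hits as [t1 [t01 X1]]. exists t1. split; [exact t01|].
  intros t Ht. specialize (mono t1 t ltac:(lra)). destruct (Xb t ltac:(lra)). lra.
Qed.

Section CoupledFlow.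

Variables S T L : R -> R.
Hypothesis S_sol : solves_clipped S (fun t => 2 * L t - 1).
Hypothesis T_sol : solves_clipped T (fun t => 2 * L t - 1).
Hypothesis L_sol : solves_clipped L (fun t => 2 * (S t + T t - 1)).
Hypothesis ST0_ge1 : 1 <= S 0 + T 0.
Hypothesis L0_gt_half : 1 / 2 < L 0.

Lemma instructors_sum_ge1 b :
  (forall t, 0 <= t < b -> 1 / 2 <= L t) -> forall t, 0 <= t <= b -> 1 <= S t + T t.
Proof.
  intros Lb t Ht.
  assert (g0 : forall s, 0 <= s < t -> 0 <= 2 * L s - 1)
    by (intros s Hs; specialize (Lb s ltac:(lra)); lra).
  pose proof (solves_clipped_nondecreasing S _ 0 t S_sol ltac:(lra) g0).
  pose proof (solves_clipped_nondecreasing T _ 0 t T_sol ltac:(lra) g0).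
  lra.
Qed.

Lemma L_ge_init b : 0 <= b -> (forall t, 0 <= t < b -> 1 / 2 <= L t) -> L 0 <= L b.
Proof.
  intros b0 Lb. apply (solves_clipped_nondecreasing L _ 0 b L_sol ltac:(lra)).
  intros t Ht. pose proof (instructors_sum_ge1 b Lb t ltac:(lra)). lra.
Qed.

Lemma L_gt_half : forall t, 0 <= t -> 1 / 2 < L t.
Proof.
  apply (real_induction (fun t => 1 / 2 < L t)). intros c c0 below.
  assert (Lc : L 0 <= L c) by (apply L_ge_init; [lra | intros t Ht; apply Rlt_le, below, Ht]).
  destruct L_sol as (_ & _ & Ld).
  (* L'(c) >= 0 > -(L c - 1/2): over a time h < 1 after c, L loses less than L c - 1/2. *)
  destruct (right_deriv_gt L c _ (-(L c - 1 / 2)) (Ld c c0)) as [d [d0 Hd]].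
  { apply (Rlt_le_trans _ 0); [lra|]. apply clip_ge0.
    pose proof (instructors_sum_ge1 c (fun t Ht => Rlt_le _ _ (below t Ht)) c ltac:(lra)). lra. }
  exists (Rmin d 1). split; [apply Rmin_pos; lra|]. intros t [ct td].
  pose proof (Rmin_l d 1). pose proof (Rmin_r d 1).
  destruct (Req_dec t c) as [->|tc]; [lra|].
  specialize (Hd (t - c) ltac:(lra)). replace (c + (t - c)) with t in Hd by ring. nra.
Qed.

Lemma L_ge_L0 t : 0 <= t -> L 0 <= L t.
Proof. intros t0. apply L_ge_init; [exact t0|]. intros s Hs. apply Rlt_le, L_gt_half. lra. Qed.

Hypothesis S0_pos : 0 < S 0.
Hypothesis T0_pos : 0 < T 0.

Lemma L_eventually_one : exists t1, forall t, t1 <= t -> L t = 1.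
Proof.
  assert (gk : forall t, 0 <= t -> 2 * L 0 - 1 <= 2 * L t - 1)
    by (intros t t0; pose proof (L_ge_L0 t t0); lra).
  destruct (solves_clipped_eventually_one S _ (2 * L 0 - 1) 0 S_sol) as [tS [tS0 S1]];
    [lra | lra | exact gk | exact S0_pos |].
  destruct (solves_clipped_eventually_one T _ (2 * L 0 - 1) 0 T_sol) as [tT [tT0 T1]];
    [lra | lra | exact gk | exact T0_pos |].
  pose proof (Rmax_l tS tT). pose proof (Rmax_r tS tT).
  destruct (solves_clipped_eventually_one L _ 2 (Rmax tS tT) L_sol) as [tL [_ L1]];
    [lra | lra | | |].
  - intros t Ht. rewrite S1, T1 by lra. lra.
  - pose proof (L_ge_L0 (Rmax tS tT) ltac:(lra)). lra.
  - exists tL. exact L1.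
Qed.

End CoupledFlow.

Lemma J_closed_form a b c : J a b c = a * c + (1 - a) * (1 - c) + b * (1 - c) + (1 - b) * c.
Proof. unfold J, sumb, p_obs, pol, Rw, Rw'. simpl. field. Qed.

Lemma Derive_J_S a b c : Derive (fun x => J x b c) a = 2 * c - 1.
Proof.
  apply is_derive_unique.
  apply (is_derive_ext (fun x => x * c + (1 - x) * (1 - c) + b * (1 - c) + (1 - b) * c)).
  { intros. rewrite J_closed_form. reflexivity. }
  auto_derive; auto; ring.
Qed.

Lemma Derive_J_S' a b c : Derive (fun x => J a x c) b = 1 - 2 * c.
Proof.
  apply is_derive_unique.
  apply (is_derive_ext (fun x => a * c + (1 - a) * (1 - c) + x * (1 - c) + (1 - x) * c)).
  { intros. rewrite J_closed_form. reflexivity. }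
  auto_derive; auto; ring.
Qed.

Lemma Derive_J_L a b c : Derive (fun x => J a b x) c = 2 * (a - b).
Proof.
  apply is_derive_unique.
  apply (is_derive_ext (fun x => a * x + (1 - a) * (1 - x) + b * (1 - x) + (1 - b) * x)).
  { intros. rewrite J_closed_form. reflexivity. }
  auto_derive; auto; ring.
Qed.

Lemma clipped_flow_solves S S' L :
  clipped_flow S S' L ->
  solves_clipped S (fun t => 2 * L t - 1) /\
  solves_clipped (fun t => 1 - S' t) (fun t => 2 * L t - 1) /\
  solves_clipped L (fun t => 2 * (S t + (1 - S' t) - 1)).
Proof.
  intros (bnd & cont & der).
  split; [|split]; (split; [|split]).
  - intros t t0. apply bnd, t0.
  - intros t t0. apply cont, t0.
  - intros t t0. destruct (der t t0) as [dS _]. rewrite Derive_J_S in dS. exact dS.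
  - intros t t0. destruct (bnd t t0) as [_ [? _]]. lra.
  - intros t t0. apply continuity_pt_filterlim, continuity_pt_minus; [reg|].
    apply continuity_pt_filterlim, cont, t0.
  - intros t t0. destruct (der t t0) as [_ [dS' _]]. rewrite Derive_J_S' in dS'.
    replace (2 * L t - 1) with (- (1 - 2 * L t)) by ring. rewrite clip_compl.
    exact (right_deriv_compl S' t _ dS').
  - intros t t0. apply bnd, t0.
  - intros t t0. apply cont, t0.
  - intros t t0. destruct (der t t0) as [_ [_ dL]]. rewrite Derive_J_L in dL.
    replace (2 * (S t + (1 - S' t) - 1)) with (2 * (S t - S' t)) by ring. exact dL.
Qed.

Theorem proposition2 (S S' L : R -> R) :
  clipped_flow S S' L ->
  0 < S 0 < 1 -> 0 < S' 0 < 1 -> 0 < L 0 < 1 ->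
  L 0 > 1 / 2 -> S 0 = S' 0 ->
  is_lim L p_infty 1.
Proof.
  intros flow S0 S'0 _ L0 SS'0.
  destruct (clipped_flow_solves S S' L flow) as (S_sol & T_sol & L_sol).
  destruct (L_eventually_one S (fun t => 1 - S' t) L S_sol T_sol L_sol) as [t1 L1];
    [lra | lra | lra | lra |].
  apply (is_lim_ext_loc (fun _ => 1)); [| apply is_lim_const].
  exists t1. intros t Ht. symmetry. apply L1. lra.
Qed.
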